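(* Let $(X,\mathcal{M})$ be a measurable space, $\Sigma$ a compact Hausdorff group with Haar probability measure $\mu_\Sigma$ acting measurably on $X$ via $T_\sigma$. Let $n\in\mathbb{Z}^+$ and let $V$ be a linear subspace of $\mathcal{M}_b(X)^n$ that is closed under $\Sigma$ (i.e. $\gamma\circ T_\sigma\in V$ for all $\gamma\in V$, $\sigma\in\Sigma$) and satisfies $S_\Sigma[V]\subset V$. Let $H:V\times\mathcal{P}(X)\times\mathcal{P}(X)\to[-\infty,\infty)$ and $\Gamma\subset V$, and set $D_H^\Gamma(Q\|P)=\sup_{\gamma\in\Gamma}H(\gamma;Q,P)$. Suppose that for all $Q,P\in\mathcal{P}(X)$ the map $H(\cdot;Q,P)$ is concave and upper semicontinuous on $V$ with respect to the $M(X)$-topology, and that $H(\gamma\circ T_\sigma;Q,P)=H(\gamma;Q\circ T_\sigma^{-1},P\circ T_\sigma^{-1})$ for all $\sigma\in\Sigma$, $\gamma\in V$, $Q,P\in\mathcal{P}(X)$. Then for all $\Sigma$-invariant $Q,P$, $D_H^\Gamma(Q\|P)\le D_H^{S_\Sigma[\Gamma]}(Q\|P)$. If in addition $S_\Sigma[\Gamma]\subset\Gamma$, then $S_\Sigma[\Gamma]=\Gamma^{\mathrm{inv}}_\Sigma$ and $D_H^\Gamma(Q\|P)=D_H^{\Gamma^{\mathrm{inv}}_\Sigma}(Q\|P)$ for all $\Sigma$-invariant $Q,P$.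
   Context: $S_\Sigma[\gamma](x)=\int_\Sigma\gamma(T_\sigma(x))\mu_\Sigma(d\sigma)$, applied componentwise to elements of $\mathcal{M}_b(X)^n$. $\Gamma^{\mathrm{inv}}_\Sigma=\{\gamma\in\Gamma:\gamma\circ T_\sigma=\gamma\ \forall\sigma\}$. A probability measure $P$ is $\Sigma$-invariant if $P\circ T_\sigma^{-1}=P$ for all $\sigma$. $M(X)$-topology: with $M(X)$ the finite signed measures on $X$, for $\nu\in M(X)^n$ let $\tau_\nu(\gamma)=\sum_{i=1}^n\int\gamma^i d\nu_i$; $V$ is given the weakest topology making every $\tau_\nu$ continuous. *)

From HB Require Import structures.
From mathcomp Require Import all_boot all_order all_algebra.
From mathcomp Require Import all_classical all_reals all_analysis.
Set Implicit Arguments.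
Unset Strict Implicit.
Unset Printing Implicit Defensive.
Import Order.TTheory GRing.Theory Num.Theory.
Import numFieldNormedType.Exports.
Local Open Scope classical_set_scope.
Local Open Scope ring_scope.

#[short(type="topGroupType")]
HB.structure Definition TopGroup := {G of Group G & PointedTopological G}.

Definition compact_hausdorff_group (G : topGroupType) : Prop :=
  [/\ continuous (fun p : G * G => (p.1 * p.2)%g),
      continuous (fun x : G => (x^-1)%g),
      @compact G [set: G] &
      hausdorff_space G].

Notation borel T := (g_sigma_algebraType (@open T)).

(** Haar probability measure of a compact group: a Radon (outer regular on
    Borel sets, inner regular by compact sets on open sets) Borel probability
    measure invariant under left and right translations. *)
Definition haar_probability (G : topGroupType) (R : realType)
    (mu : probability (borel G) R) : Prop :=
  [/\ (forall (s : G) (A : set (borel G)), measurable A ->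
          mu [set (s * a)%g | a in A] = mu A),
      (forall (s : G) (A : set (borel G)), measurable A ->
          mu [set (a * s)%g | a in A] = mu A),
      (forall A : set (borel G), measurable A ->
          mu A = ereal_inf [set mu U | U in [set U : set (borel G) |
                                  @open G U /\ A `<=` U]]) &
      (forall U : set (borel G), @open G U ->
          mu U = ereal_sup [set mu K | K in [set K : set (borel G) |
                                  @compact G K /\ K `<=` U]])].

Definition measurable_action (G : topGroupType) d (X : measurableType d)
    (T : G -> X -> X) : Prop :=
  [/\ (forall x, T 1%g x = x),
      (forall s t x, T (s * t)%g x = T s (T t x)) &
      measurable_fun [set: (borel G * X)%type] (fun p => T p.1 p.2)].

(** Elements of M_b(X)^n are represented as n-families of real functions. *)
Definition vfun (n : nat) (X : Type) (R : Type) := 'I_n -> X -> R.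

Definition Mb (n : nat) d (X : measurableType d) (R : realType)
    (g : vfun n X R) : Prop :=
  forall i, measurable_fun [set: X] (g i) /\ exists M : R, forall x, `|g i x| <= M.

Definition linear_subspace (n : nat) (X : Type) (R : realType)
    (V : set (vfun n X R)) : Prop :=
  [/\ V (fun _ _ => 0),
      (forall f g, V f -> V g -> V (fun i x => f i x + g i x)) &
      (forall (a : R) f, V f -> V (fun i x => a * f i x))].

Definition act_fun (G : Type) (X : Type) (R : Type) (n : nat)
    (T : G -> X -> X) (s : G) (g : vfun n X R) : vfun n X R :=
  fun i x => g i (T s x).

Definition symmetrize (G : topGroupType) (R : realType)
    (mu : probability (borel G) R) d (X : measurableType d) (n : nat)
    (T : G -> X -> X) (g : vfun n X R) : vfun n X R :=
  fun i x => Rintegral mu [set: borel G] (fun s : borel G => g i (T s x)).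

Definition inv_part (G : Type) (X : Type) (R : Type) (n : nat)
    (T : G -> X -> X) (Gam : set (vfun n X R)) : set (vfun n X R) :=
  [set g | Gam g /\ forall s, act_fun T s g = g].

Definition sigma_invariant (G : Type) d (X : measurableType d) (R : realType)
    (T : G -> X -> X) (P : probability X R) : Prop :=
  forall s (A : set X), measurable A -> P (T s @^-1` A) = P A.

Definition is_pushforward (G : Type) d (X : measurableType d) (R : realType)
    (T : G -> X -> X) (s : G) (P P' : probability X R) : Prop :=
  forall A : set X, measurable A -> P' A = P (T s @^-1` A).

(** tau_nu(gamma) = sum_i int gamma^i d nu_i, with the finite signed measure
    nu_i written as nup i - num i (difference of finite measures). *)
Definition tauM (n : nat) d (X : measurableType d) (R : realType)
    (nup num : 'I_n -> {finite_measure set X -> \bar R}) (g : vfun n X R) : R :=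
  \sum_(i < n) (Rintegral (nup i) [set: X] (g i) - Rintegral (num i) [set: X] (g i)).

(** F is upper semicontinuous on V w.r.t. the M(X)-topology (the weakest
    topology making every tau_nu continuous), restricted to V. *)
Definition usc_MX (n : nat) d (X : measurableType d) (R : realType)
    (V : set (vfun n X R)) (F : vfun n X R -> \bar R) : Prop :=
  forall g0, V g0 -> forall c : R, (F g0 < c%:E)%E ->
    exists (k : nat) (nup num : 'I_k -> 'I_n -> {finite_measure set X -> \bar R})
           (e : R), 0 < e /\
      forall g, V g ->
        (forall j, `|tauM (nup j) (num j) g - tauM (nup j) (num j) g0| < e) ->
        (F g < c%:E)%E.

Definition concave_on (n : nat) (X : Type) (R : realType)
    (V : set (vfun n X R)) (F : vfun n X R -> \bar R) : Prop :=
  forall f g (t : R), V f -> V g -> 0 < t < 1 ->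
    (t%:E * F f + (1 - t)%:E * F g <= F (fun i x => (t * f i x + (1 - t) * g i x)%R))%E.

Definition DH (n : nat) d (X : measurableType d) (R : realType)
    (H : vfun n X R -> probability X R -> probability X R -> \bar R)
    (Gam : set (vfun n X R)) (Q P : probability X R) : \bar R :=
  ereal_sup [set H g Q P | g in Gam].

(* For Sigma-invariant Q and P, the equivariance of H gives
   H(g o T_s; Q, P) = H(g; Q, P) for every translate, so by concavity every
   finite convex combination of translates of g has value at least H(g; Q, P).
   By Fubini, tau_nu(S_Sigma[g]) is the Haar integral of the bounded
   function s |-> tau_nu(g o T_s); quantizing the values of finitely many
   such functions turns these integrals into Riemann sums with common
   weights and sample points.  Hence S_Sigma[g] lies in the M(X)-closure of
   the convex combinations of translates, and upper semicontinuity yields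
   H(g; Q, P) <= H(S_Sigma[g]; Q, P).  For the second part, right invariance
   of the Haar measure makes S_Sigma[g] invariant, and S_Sigma fixes
   invariant functions. *)

From HB Require Import structures.
From mathcomp Require Import all_boot all_order all_algebra.
From mathcomp Require Import all_classical all_reals all_analysis.
From mathcomp Require Import measurable_realfun lra.
Import Order.TTheory GRing.Theory Num.Theory.
Import numFieldNormedType.Exports.
Set Implicit Arguments.
Unset Strict Implicit.
Local Open Scope classical_set_scope.
Local Open Scope ring_scope.

Section bounded_measurable.
Context d (T : measurableType d) (R : realType).
Implicit Types (f g : T -> R) (mu : {finite_measure set T -> \bar R}).

Definition bounded_measurable f :=
  measurable_fun [set: T] f /\ exists M : R, forall x, `|f x| <= M.

Lemma bounded_measurable_integrable mu f :
  bounded_measurable f -> mu.-integrable [set: T] (EFin \o f).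
Proof.
case=> mf [M fM]; apply: measurable_bounded_integrable => //.
  by apply: fin_num_fun_lty; exact: fin_num_measure.
exists M; split; first by rewrite num_real.
by move=> y My x _; apply: le_trans (fM x) _; exact: ltW.
Qed.

Lemma bounded_measurable_cst (c : R) : bounded_measurable (fun => c).
Proof. by split; [exact: measurable_cst | exists `|c|]. Qed.

Lemma bounded_measurableD f g : bounded_measurable f -> bounded_measurable g ->
  bounded_measurable (fun x => f x + g x).
Proof.
move=> [mf [M fM]] [mg [N gN]]; split; first exact: measurable_funD.
by exists (M + N) => x; apply: le_trans (ler_normD _ _) _; exact: lerD.
Qed.

Lemma bounded_measurableM f g : bounded_measurable f -> bounded_measurable g ->
  bounded_measurable (fun x => f x * g x).
Proof.
move=> [mf [M fM]] [mg [N gN]]; split; first exact: measurable_funM.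
by exists (M * N) => x; rewrite normrM; exact: ler_pM.
Qed.

Lemma bounded_measurableZ (c : R) f : bounded_measurable f ->
  bounded_measurable (fun x => c * f x).
Proof. exact/bounded_measurableM/bounded_measurable_cst. Qed.

Lemma bounded_measurableN f : bounded_measurable f ->
  bounded_measurable (fun x => - f x).
Proof.
move=> [mf [M fM]]; split; first exact: measurableT_comp.
by exists M => x; rewrite normrN.
Qed.

Lemma bounded_measurableB f g : bounded_measurable f -> bounded_measurable g ->
  bounded_measurable (fun x => f x - g x).
Proof. by move=> bf bg; apply: bounded_measurableD => //; exact: bounded_measurableN. Qed.

Lemma bounded_measurable_sum I (s : seq I) (F : I -> T -> R) :
  (forall i, bounded_measurable (F i)) ->
  bounded_measurable (fun x => \sum_(i <- s) F i x).
Proof.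
move=> bF; elim: s => [|i s IH].
  by under eq_fun do rewrite big_nil; exact: bounded_measurable_cst.
by under eq_fun do rewrite big_cons; exact: bounded_measurableD.
Qed.

Lemma bounded_measurable_indic (A : set T) : measurable A ->
  bounded_measurable (\1_A : T -> R).
Proof.
move=> mA; split; first exact: measurable_indic.
by exists 1 => x; rewrite indicE; case: (x \in A); rewrite ?normr1 ?normr0.
Qed.

Lemma Rintegral_indic mu (A : set T) : measurable A ->
  Rintegral mu [set: T] (\1_A : T -> R) = fine (mu A).
Proof. by move=> mA; rewrite /Rintegral integral_indic // setIT. Qed.

Lemma Rintegral_sum mu I (s : seq I) (F : I -> T -> R) :
  (forall i, bounded_measurable (F i)) ->
  Rintegral mu [set: T] (fun x => \sum_(i <- s) F i x) =
  \sum_(i <- s) Rintegral mu [set: T] (F i).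
Proof.
move=> bF; elim: s => [|i s IH].
  rewrite big_nil; under eq_Rintegral do rewrite big_nil.
  by rewrite Rintegral_cst // mul0r.
rewrite big_cons -IH; under eq_Rintegral do rewrite big_cons.
rewrite RintegralD //; first exact: bounded_measurable_integrable.
exact/bounded_measurable_integrable/bounded_measurable_sum.
Qed.

Lemma normr_Rintegral_le mu f (M : R) : bounded_measurable f ->
  (forall x, `|f x| <= M) -> `|Rintegral mu [set: T] f| <= M * fine (mu [set: T]).
Proof.
move=> bf fM; have [mf [N fN]] := bf.
apply: le_trans (le_normr_Rintegral _ _) _ => //.
  exact: bounded_measurable_integrable.
rewrite -Rintegral_cst //; apply: le_Rintegral => //.
- apply: bounded_measurable_integrable; split; first exact: measurableT_comp.
  by exists N => x; rewrite normr_id.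
- exact/bounded_measurable_integrable/bounded_measurable_cst.
Qed.

End bounded_measurable.

Section bounded_measurable_pair.
Context d1 d2 (T1 : measurableType d1) (T2 : measurableType d2) (R : realType).
Variable F : T1 * T2 -> R.
Hypothesis bF : bounded_measurable F.

Lemma bounded_measurable_pair1 b : bounded_measurable (fun a => F (a, b)).
Proof. by case: bF => mF [M FM]; split; [exact: measurable_fun_pair1 | exists M]. Qed.

Lemma bounded_measurable_pair2 a : bounded_measurable (fun b => F (a, b)).
Proof. by case: bF => mF [M FM]; split; [exact: measurable_fun_pair2 | exists M]. Qed.

End bounded_measurable_pair.

Section fubini_bounded.
Context d1 d2 (T1 : measurableType d1) (T2 : measurableType d2) (R : realType).
Variables (m1 : {finite_measure set T1 -> \bar R}) (m2 : {finite_measure set T2 -> \bar R}).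
Variable F : T1 * T2 -> R.
Hypothesis bF : bounded_measurable F.

Let m1s : {sigma_finite_measure set T1 -> \bar R} := m1.
Let m2s : {sigma_finite_measure set T2 -> \bar R} := m2.

Let integrableF : (m1s \x m2s)%E.-integrable [set: T1 * T2] (EFin \o F).
Proof.
case: bF => mF [M FM]; apply: measurable_bounded_integrable => //.
  rewrite -setXTT; apply: (@le_lt_trans _ _ (m1s setT * m2s setT)%E).
    by rewrite le_eqVlt; apply/orP; left; apply/eqP;
      exact: (product_measure1E m1s m2s measurableT measurableT).
  by apply: lte_mul_pinfty; rewrite ?measure_ge0 ?ge0_fin_numE ?measure_ge0 //;
    apply: fin_num_fun_lty; exact: fin_num_measure.
exists M; split; first by rewrite num_real.
by move=> y My x _; apply: le_trans (FM x) _; exact: ltW.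
Qed.

Lemma bounded_measurable_Rintegral_pair2 :
  bounded_measurable (fun a => Rintegral m2 [set: T2] (fun b => F (a, b))).
Proof.
split.
  exact: measurableT_comp (fine_measurable measurableT) (measurable_fubini_F integrableF).
case: bF => mF [M FM]; exists (M * fine (m2 [set: T2])) => a.
by apply: normr_Rintegral_le => [|b]; [exact: bounded_measurable_pair2 | exact: FM].
Qed.

Lemma Rintegral_fubini :
  Rintegral m2 [set: T2] (fun b => Rintegral m1 [set: T1] (fun a => F (a, b))) =
  Rintegral m1 [set: T1] (fun a => Rintegral m2 [set: T2] (fun b => F (a, b))).
Proof.
rewrite /Rintegral; congr fine.
have fin1 b : ((fine (\int[m1]_a (F (a, b))%:E))%:E = \int[m1]_a (F (a, b))%:E)%E.
  by rewrite fineK // integrable_fin_num // bounded_measurable_integrable //;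
    exact: bounded_measurable_pair1.
have fin2 a : ((fine (\int[m2]_b (F (a, b))%:E))%:E = \int[m2]_b (F (a, b))%:E)%E.
  by rewrite fineK // integrable_fin_num // bounded_measurable_integrable //;
    exact: bounded_measurable_pair2.
under eq_integral do rewrite fin1.
under [RHS]eq_integral do rewrite fin2.
by have := Fubini integrableF.
Qed.

End fubini_bounded.

Section quantize.
Context d (T : measurableType d) (R : realType).

Lemma bounded_measurable_quantize1 (v : T -> R) (delta : R) :
  bounded_measurable v -> 0 < delta ->
  exists N (q : T -> 'I_N), (forall z, measurable (q @^-1` [set z])) /\
    (forall x x', q x = q x' -> `|v x - v x'| <= delta).
Proof.
move=> [mv [M vM]] delta_gt0; pose y x := (v x + M) / delta.
have vM' x : - M <= v x <= M by rewrite -ler_norml.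
have y_ge0 x : 0 <= y x.
  by apply: divr_ge0; [have := vM' x; lra | exact: ltW].
have y_lt x : (Num.truncn (y x) < (Num.truncn (2 * M / delta)).+1)%N.
  by rewrite ltnS; apply: le_truncn; rewrite ler_pM2r ?invr_gt0 //; have := vM' x; lra.
pose q x : 'I_(Num.truncn (2 * M / delta)).+1 := inord (Num.truncn (y x)).
have qE x : nat_of_ord (q x) = Num.truncn (y x) by rewrite inordK.
exists _, q; split=> [z|x x' qxx'].
  have -> : q @^-1` [set z] = y @^-1` `[(z%:R : R), z.+1%:R[.
    apply/seteqP; split => x /=; first by move=> <-; rewrite qE in_itv /= truncn_itv.
    by rewrite in_itv => yz; apply: val_inj; rewrite /= qE; apply/eqP; rewrite truncn_eq.
  have my : measurable_fun [set: T] y by apply: measurable_funM => //; exact: measurable_funD.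
  by rewrite -[X in measurable X]setTI; apply: my => //; exact: measurable_itv.
have := truncn_itv (y_ge0 x); have := truncn_itv (y_ge0 x').
(* Generalizing the index keeps natr1 from rewriting inside the type of q x'. *)
rewrite -!qE qxx'; move: (nat_of_ord _) => m.
rewrite -!natr1 /y !ler_pdivlMr // !ltr_pdivrMr // => /andP[? ?] /andP[? ?].
by rewrite ler_norml; apply/andP; split; lra.
Qed.

Lemma bounded_measurable_quantize (I : finType) (v : I -> T -> R) (delta : R) :
  (forall j, bounded_measurable (v j)) -> 0 < delta ->
  exists (F : finType) (q : T -> F), (forall z, measurable (q @^-1` [set z])) /\
    (forall j x x', q x = q x' -> `|v j x - v j x'| <= delta).
Proof.
move=> bv delta_gt0.
have /choice[p pP] j : exists p : {N : nat & T -> 'I_N},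
    (forall z, measurable (projT2 p @^-1` [set z])) /\
    (forall x x', projT2 p x = projT2 p x' -> `|v j x - v j x'| <= delta).
  by have [N [q qP]] := bounded_measurable_quantize1 (bv j) delta_gt0; exists (existT _ N q).
exists {dffun forall j, 'I_(projT1 (p j))}, (fun x => [ffun j => projT2 (p j) x]).
split=> [z|j x x' /ffunP/(_ j)]; last by rewrite !ffunE; exact: (pP j).2.
have -> : (fun x => [ffun j => projT2 (p j) x]) @^-1` [set z] =
    \bigcap_(j in [set: I]) (projT2 (p j) @^-1` [set z j]).
  apply/seteqP; split => x /=; first by move=> <- j _; rewrite ffunE.
  by move=> qz; apply/ffunP => j; rewrite ffunE; exact: qz.
by apply: fin_bigcap_measurable => [|j _]; [exact: finite_finset | exact: (pP j).1].
Qed.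

End quantize.

Lemma fine_probability_setT d (T : measurableType d) (R : realType)
  (P : probability T R) : fine (P [set: T]) = 1.
Proof. by have := congr1 fine (probability_setT P). Qed.

Section riemann_sum.
Context d (T : measurableType d) (R : realType) (mu : probability T R).
Variables (F : finType) (q : T -> F).
Hypothesis mq : forall z, measurable (q @^-1` [set z]).

Let cell z := q @^-1` [set z].

Definition cell_weight z : R := fine (mu (cell z)).

(* An arbitrary point when the cell is empty, but then its weight is 0. *)
Definition cell_point z : T := xget point (cell z).

Lemma cell_weight_ge0 z : 0 <= cell_weight z.
Proof. exact/fine_ge0/measure_ge0. Qed.

Let sum_indic_cell (c : F -> R) x : \sum_z c z * \1_(cell z) x = c (q x).
Proof.
rewrite (bigD1 (q x)) //= indicE mem_set // mulr1 big1 ?addr0 // => z zqx.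
by rewrite indicE memNset ?mulr0 // => qxz; rewrite qxz eqxx in zqx.
Qed.

Let bounded_measurable_cell (c : R) z :
  bounded_measurable (fun x => c * \1_(cell z) x).
Proof. exact/bounded_measurableZ/bounded_measurable_indic/mq. Qed.

Lemma sum_cell_weight : \sum_z cell_weight z = 1.
Proof.
transitivity (Rintegral mu [set: T] (fun x => \sum_z 1 * \1_(cell z) x)).
  rewrite Rintegral_sum; last by move=> z; exact: bounded_measurable_cell.
  apply: eq_bigr => z _; rewrite RintegralZl ?mul1r ?(Rintegral_indic _ (mq z)) //.
  exact/bounded_measurable_integrable/bounded_measurable_indic/mq.
under eq_Rintegral do rewrite sum_indic_cell.
by rewrite Rintegral_cst // fine_probability_setT mul1r.
Qed.

Lemma riemann_sum_approx (v : T -> R) (delta : R) : bounded_measurable v ->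
  (forall x y, q x = q y -> `|v x - v y| <= delta) ->
  `|Rintegral mu [set: T] v - \sum_z cell_weight z * v (cell_point z)| <= delta.
Proof.
move=> bv v_osc; pose u x := v (cell_point (q x)).
have uE : u = fun x => \sum_z v (cell_point z) * \1_(cell z) x.
  by apply/funext => x; rewrite sum_indic_cell.
have bu : bounded_measurable u.
  by rewrite uE; apply: bounded_measurable_sum => z; exact: bounded_measurable_cell.
have -> : \sum_z cell_weight z * v (cell_point z) = Rintegral mu [set: T] u.
  rewrite uE Rintegral_sum; last by move=> z; exact: bounded_measurable_cell.
  apply: eq_bigr => z _; rewrite RintegralZl ?(Rintegral_indic _ (mq z)) 1?mulrC //.
  exact/bounded_measurable_integrable/bounded_measurable_indic/mq.
rewrite -RintegralB //; try exact: bounded_measurable_integrable.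
have -> : delta = delta * fine (mu [set: T]) by rewrite fine_probability_setT mulr1.
apply: normr_Rintegral_le => [|x]; first exact: bounded_measurableB.
apply: v_osc; rewrite /cell_point.
by have -> := xgetPex point (ex_intro (cell (q x)) x erefl).
Qed.

End riemann_sum.

Lemma Rintegral_approx_convex_sum d (T : measurableType d) (R : realType)
  (mu : probability T R) (I : finType) (v : I -> T -> R) (delta : R) :
  (forall j, bounded_measurable (v j)) -> 0 < delta ->
  exists (F : finType) (w : F -> R) (s : F -> T),
   [/\ forall z, 0 <= w z, \sum_z w z = 1 &
    forall j, `|Rintegral mu [set: T] (v j) - \sum_z w z * v j (s z)| <= delta].
Proof.
move=> bv delta_gt0; have [F [q [mq q_osc]]] := bounded_measurable_quantize bv delta_gt0.
exists F, (cell_weight mu q), (cell_point q); split.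
- exact: cell_weight_ge0.
- exact: sum_cell_weight.
- by move=> j; apply: riemann_sum_approx => //; exact: q_osc.
Qed.

Lemma convex_combination_closed (R : realFieldType) (U : lmodType R) (C : set U) :
  (forall f g (t : R), C f -> C g -> 0 < t < 1 -> C (t *: f + (1 - t) *: g)) ->
  forall (I : eqType) (s : seq I) (w : I -> R) (g : I -> U),
  (forall i, 0 <= w i) -> (forall i, C (g i)) -> \sum_(i <- s) w i = 1 ->
  C (\sum_(i <- s) w i *: g i).
Proof.
move=> Cconv I s; elim: s => [|i s IH] w g w_ge0 Cg.
  by rewrite big_nil => /eqP; rewrite eq_sym oner_eq0.
rewrite !big_cons => wsum.
have rest_ge0 : 0 <= \sum_(k <- s) w k by exact: sumr_ge0.
have [wi1|wi1] := eqVneq (w i) 1.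
  have /eqP : \sum_(k <- s) w k = 0 by lra.
  rewrite psumr_eq0 // => /allP w0.
  rewrite wi1 scale1r big1_seq ?addr0 // => k /andP[_ /w0].
  by rewrite implyTb => /eqP ->; rewrite scale0r.
have [wi0|wi0] := eqVneq (w i) 0.
  by rewrite wi0 scale0r add0r; apply: IH => //; lra.
have wi_gt0 : 0 < w i by rewrite lt_neqAle eq_sym wi0 w_ge0.
have wi_lt1 : w i < 1 by rewrite lt_neqAle wi1 /=; lra.
have wiC_neq0 : 1 - w i != 0 by apply/eqP; lra.
have C_rest : C (\sum_(k <- s) (w k / (1 - w i)) *: g k).
  apply: IH => // [k|]; first by apply: divr_ge0 => //; lra.
  by rewrite -mulr_suml (_ : \sum_(k <- s) w k = 1 - w i) ?mulfV //; lra.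
have := Cconv _ _ (w i) (Cg i) C_rest; rewrite wi_gt0 wi_lt1 => /(_ isT).
congr C; congr (_ + _); rewrite scaler_sumr; apply: eq_bigr => k _.
by rewrite scalerA mulrCA mulfV // mulr1.
Qed.

Section tauM_linear.
Context d (X : measurableType d) (R : realType) (n : nat).
Variables (nup num : 'I_n -> {finite_measure set X -> \bar R}).

Lemma tauM_sum I (s : seq I) (w : I -> R) (G : I -> vfun n X R) :
  (forall z i, bounded_measurable (G z i)) ->
  tauM nup num (\sum_(z <- s) w z *: G z) = \sum_(z <- s) w z * tauM nup num (G z).
Proof.
move=> bG; rewrite /tauM.
have Rintegral_comb (m : {finite_measure set X -> \bar R}) i :
    Rintegral m [set: X] ((\sum_(z <- s) w z *: G z) i) =
    \sum_(z <- s) w z * Rintegral m [set: X] (G z i).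
  rewrite !fct_sumE Rintegral_sum; last by move=> z; exact: bounded_measurableZ.
  apply: eq_bigr => z _; rewrite RintegralZl //; exact: bounded_measurable_integrable.
under eq_bigr do rewrite !Rintegral_comb -sumrB.
rewrite exchange_big /=; apply: eq_bigr => z _.
by rewrite mulr_sumr; apply: eq_bigr => i _; rewrite mulrBr.
Qed.

End tauM_linear.

Section right_translation.
Context (R : realType) (G : topGroupType) (mu : probability (borel G) R).
Hypothesis mulg_continuous : continuous (fun p : G * G => (p.1 * p.2)%g).

Lemma measurable_mulg_right (t : G) :
  measurable_fun [set: borel G] (fun s : borel G => (s * t)%g : borel G).
Proof.
have ct : continuous (fun s : G => (s * t)%g).
  move=> x; apply: (@continuous_comp _ _ _ (fun s : G => (s, t)) (fun p => (p.1 * p.2)%g)).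
    by apply: cvg_pair; [exact: cvg_id | exact: cvg_cst].
  exact: mulg_continuous.
apply: (@measurability _ _ (borel G) (borel G) _ _ (@open G)) => // _ [U oU <-].
by rewrite setTI; apply: sub_sigma_algebra; exact: open_comp (fun x _ => ct x) oU.
Qed.

Hypothesis mu_mulg_right :
  forall (t : G) (A : set (borel G)), measurable A -> mu [set (a * t)%g | a in A] = mu A.

Lemma Rintegral_mulg_right (phi : borel G -> R) (t : G) : bounded_measurable phi ->
  Rintegral mu [set: borel G] (fun s => phi (s * t)%g) = Rintegral mu [set: borel G] phi.
Proof.
move=> [mphi [M phiM]]; have mt := measurable_mulg_right t.
have bphit : bounded_measurable (fun s : borel G => phi (s * t)%g).
  by split; [exact: measurableT_comp mphi mt | exists M].
rewrite /Rintegral; congr fine.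
rewrite -(@integral_pushforward _ _ _ _ R _ mt mu setT (EFin \o phi)) //; last 2 first.
- exact/measurable_EFinP.
- by rewrite preimage_setT; exact: bounded_measurable_integrable.
apply: eq_measure_integral => A mA _.
transitivity (mu [set (a * t^-1)%g | a in A]); last exact: mu_mulg_right.
congr (mu _); apply/seteqP; split => x /=.
  by move=> Ax; exists (x * t)%g; rewrite // mulgK.
by move=> [a Aa <-]; rewrite mulgVK.
Qed.

End right_translation.

Lemma concave_superlevel_convex (X : Type) (R : realType) (n : nat)
  (V : set (vfun n X R)) (F : vfun n X R -> \bar R) (r : R) :
  linear_subspace V -> concave_on V F -> (forall g, V g -> F g != +oo%E) ->
  forall f g (t : R), V f /\ (r%:E <= F f)%E -> V g /\ (r%:E <= F g)%E -> 0 < t < 1 ->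
  V (t *: f + (1 - t) *: g) /\ (r%:E <= F (t *: f + (1 - t) *: g)%R)%E.
Proof.
move=> [_ VD VZ] Fconc Ffin f g t [Vf Ff] [Vg Fg] t01.
split; first exact: VD (VZ t f Vf) (VZ (1 - t) g Vg).
apply: le_trans (Fconc f g t Vf Vg t01).
move: (Ffin f Vf) (Ffin g Vg) Ff Fg.
case: (F f) => [a| |]; case: (F g) => [b| |] //= _ _; rewrite !lee_fin => ra rb.
by case/andP: t01 => t0 t1; nra.
Qed.

Section symmetrization.
Context (R : realType) (Sig : topGroupType) (mu : probability (borel Sig) R)
  d (X : measurableType d) (T : Sig -> X -> X) (n : nat).
Hypothesis mT : measurable_fun [set: (borel Sig * X)%type] (fun p : borel Sig * X => T p.1 p.2).

Lemma bounded_measurable_comp_action (f : X -> R) : bounded_measurable f ->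
  bounded_measurable (fun p : borel Sig * X => f (T p.1 p.2)).
Proof. by move=> [mf [M fM]]; split; [exact: measurableT_comp mf mT | exists M]. Qed.

Lemma bounded_measurable_act (s : Sig) (f : X -> R) : bounded_measurable f ->
  bounded_measurable (fun x => f (T s x)).
Proof. by move=> bf; exact: bounded_measurable_pair2 (bounded_measurable_comp_action bf) s. Qed.

Section tauM_action.
Variables (nup num : 'I_n -> {finite_measure set X -> \bar R}) (g : vfun n X R).
Hypothesis bg : forall i, bounded_measurable (g i).

Lemma bounded_measurable_tauM_act :
  bounded_measurable (fun s : borel Sig => tauM nup num (act_fun T s g)).
Proof.
apply: bounded_measurable_sum => i; apply: bounded_measurableB;
  exact: bounded_measurable_Rintegral_pair2 mu _ _ (bounded_measurable_comp_action (bg i)).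
Qed.

Lemma tauM_symmetrize : tauM nup num (symmetrize mu T g) =
  Rintegral mu [set: borel Sig] (fun s => tauM nup num (act_fun T s g)).
Proof.
have bFi i := bounded_measurable_comp_action (bg i).
have bRi (m : {finite_measure set X -> \bar R}) i :=
  bounded_measurable_Rintegral_pair2 mu m (bFi i).
rewrite /tauM Rintegral_sum; last by move=> i; apply: bounded_measurableB; exact: bRi.
apply: eq_bigr => i _.
by rewrite RintegralB ?(Rintegral_fubini mu _ (bFi i)) //;
  exact/bounded_measurable_integrable/bRi.
Qed.

End tauM_action.

Lemma symmetrize_approx (g : vfun n X R) (I : finType)
  (nup num : I -> 'I_n -> {finite_measure set X -> \bar R}) (e : R) :
  (forall i, bounded_measurable (g i)) -> 0 < e ->
  exists (F : finType) (w : F -> R) (s : F -> Sig),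
   [/\ forall z, 0 <= w z, \sum_z w z = 1 &
    forall j, `|tauM (nup j) (num j) (\sum_z w z *: act_fun T (s z) g) -
                tauM (nup j) (num j) (symmetrize mu T g)| < e].
Proof.
move=> bg e_gt0; have e2_gt0 : 0 < e / 2 by exact: divr_gt0.
have [F [w [s [w_ge0 w_sum approx]]]] := Rintegral_approx_convex_sum mu
  (fun j => bounded_measurable_tauM_act (nup j) (num j) bg) e2_gt0.
exists F, w, s; split => // j.
rewrite tauM_sum => [|z i]; last exact: bounded_measurable_act.
rewrite tauM_symmetrize // distrC; apply: le_lt_trans (approx j) _.
by rewrite ltr_pdivrMr // ltr_pMr // ltr1n.
Qed.

Lemma H_le_H_symmetrize (V : set (vfun n X R))
  (H : vfun n X R -> probability X R -> probability X R -> \bar R) (Q P : probability X R) :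
  V `<=` @Mb n d X R -> linear_subspace V ->
  (forall (s : Sig) g, V g -> V (act_fun T s g)) ->
  symmetrize mu T @` V `<=` V ->
  (forall g, V g -> H g Q P != +oo%E) ->
  concave_on V (fun g => H g Q P) -> usc_MX V (fun g => H g Q P) ->
  (forall s g, V g -> H (act_fun T s g) Q P = H g Q P) ->
  forall g, V g -> (H g Q P <= H (symmetrize mu T g) Q P)%E.
Proof.
move=> VMb Vlin Vact VS Hfin Hconc Husc Hact g Vg.
case Hg: (H g Q P) => [r| |]; [|by have := Hfin g Vg; rewrite Hg|by rewrite leNye].
rewrite leNgt; apply/negP => HS_lt.
have [k [nup [num [e [e_gt0 Husc_g]]]]] := Husc _ (VS _ (imageP _ Vg)) r HS_lt.
have [F [w [s [w_ge0 w_sum approx]]]] := symmetrize_approx nup num (VMb _ Vg) e_gt0.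
have [Vavg Havg] : V (\sum_z w z *: act_fun T (s z) g) /\
    (r%:E <= H (\sum_z w z *: act_fun T (s z) g)%R Q P)%E.
  apply: (convex_combination_closed (C := [set f | V f /\ (r%:E <= H f Q P)%E])) => //.
    exact: concave_superlevel_convex.
  by move=> z; split; [exact: Vact | rewrite Hact // Hg].
by have := Husc_g _ Vavg approx; rewrite ltNge Havg.
Qed.

Hypothesis mulg_continuous : continuous (fun p : Sig * Sig => (p.1 * p.2)%g).
Hypothesis mu_mulg_right :
  forall (t : Sig) (A : set (borel Sig)), measurable A -> mu [set (a * t)%g | a in A] = mu A.
Hypothesis T_mulg : forall s t x, T (s * t)%g x = T s (T t x).

Lemma act_symmetrize (g : vfun n X R) (t : Sig) : (forall i, bounded_measurable (g i)) ->
  act_fun T t (symmetrize mu T g) = symmetrize mu T g.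
Proof.
move=> bg; apply/funext => i; apply/funext => x; rewrite /act_fun /symmetrize.
under eq_Rintegral do rewrite -T_mulg.
apply: Rintegral_mulg_right => //.
exact: bounded_measurable_pair1 (bounded_measurable_comp_action (bg i)) x.
Qed.

End symmetrization.

Lemma symmetrize_act_invariant (R : realType) (Sig : topGroupType)
  (mu : probability (borel Sig) R) d (X : measurableType d) (T : Sig -> X -> X)
  (n : nat) (g : vfun n X R) :
  (forall s, act_fun T s g = g) -> symmetrize mu T g = g.
Proof.
move=> g_inv; apply/funext => i; apply/funext => x; rewrite /symmetrize.
under eq_Rintegral => s _ do rewrite -[g i (T s x)]/(act_fun T s g i x) g_inv.
by rewrite Rintegral_cst // fine_probability_setT mulr1.
Qed.

Theorem theorem2 (R : realType) (Sig : topGroupType)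
    (mu : probability (borel Sig) R)
    (d : measure_display) (X : measurableType d) (T : Sig -> X -> X)
    (n : nat) (V : set (vfun n X R))
    (H : vfun n X R -> probability X R -> probability X R -> \bar R)
    (Gam : set (vfun n X R)) :
  compact_hausdorff_group Sig ->
  haar_probability mu ->
  measurable_action T ->
  (0 < n)%N ->
  V `<=` @Mb n d X R ->
  linear_subspace V ->
  (forall (s : Sig) g, V g -> V (act_fun T s g)) ->
  symmetrize mu T @` V `<=` V ->
  Gam `<=` V ->
  (forall g Q P, V g -> H g Q P != +oo%E) ->
  (forall Q P, concave_on V (fun g => H g Q P)) ->
  (forall Q P, usc_MX V (fun g => H g Q P)) ->
  (forall (s : Sig) g (Q P Q' P' : probability X R), V g ->
     is_pushforward T s Q Q' -> is_pushforward T s P P' ->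
     H (act_fun T s g) Q P = H g Q' P') ->
  (forall Q P : probability X R, sigma_invariant T Q -> sigma_invariant T P ->
     (DH H Gam Q P <= DH H (symmetrize mu T @` Gam) Q P)%E) /\
  (symmetrize mu T @` Gam `<=` Gam ->
     symmetrize mu T @` Gam = inv_part T Gam /\
     (forall Q P : probability X R, sigma_invariant T Q -> sigma_invariant T P ->
        DH H Gam Q P = DH H (inv_part T Gam) Q P)).
Proof.
move=> [mulg_cont _ _ _] [_ mu_right _ _] [_ T_mulg mT] _ VMb Vlin Vact VS GamV
  Hfin Hconc Husc Hpush.
have Hact Q P : sigma_invariant T Q -> sigma_invariant T P ->
    forall s g, V g -> H (act_fun T s g) Q P = H g Q P.
  by move=> iQ iP s g Vg; apply: Hpush => // A mA; rewrite ?iQ ?iP.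
have DH_le Q P : sigma_invariant T Q -> sigma_invariant T P ->
    (DH H Gam Q P <= DH H (symmetrize mu T @` Gam) Q P)%E.
  move=> iQ iP; apply: ge_ereal_sup => _ [g Gg <-].
  apply: le_trans (H_le_H_symmetrize mT VMb Vlin Vact VS (fun g => Hfin g Q P)
    (Hconc Q P) (Husc Q P) (Hact Q P iQ iP) (GamV _ Gg)) _.
  by apply: ereal_sup_ubound; exists (symmetrize mu T g) => //; exact: imageP.
split=> // SGam.
have SGam_inv : symmetrize mu T @` Gam = inv_part T Gam.
  apply/seteqP; split=> [_ [g Gg <-]|g [Gg g_inv]].
    by split=> [|t]; [exact: SGam | exact: act_symmetrize (VMb _ (GamV _ Gg))].
  by exists g => //; exact: symmetrize_act_invariant.
split=> // Q P iQ iP; apply/le_anti/andP; split; first by rewrite -SGam_inv; exact: DH_le.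
by apply: ereal_sup_le => _ [g [Gg _] <-]; exact: imageP.
Qed.
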